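(* Let $\lambda=(\lambda^{(1)},\lambda^{(2)})$ with $\lambda^{(1)},\lambda^{(2)}\in\mathbb R^{\mathcal U_g}_{\ge0}$ and $\mu=(\mu^{(1)}_k,\mu^{(2)}_k)_{k\in[N]}$ with $\mu^{(1)}_k,\mu^{(2)}_k\in\mathbb R^{\mathcal U_{l,k}}_{\ge0}$ be non-negative. Then an optimal solution $\mathbf h^*=(h_1^*,\dots,h_N^* )$ of the inner problem $\min_{\mathbf h\in\mathcal H^N}\mathcal L(\mathbf h,\lambda,\mu)$ is realized by local deterministic classifiers $h^*_k$, $k\in[N]$, satisfying $$h^*_k(x)=e_y,\qquad y\in\arg\max_{j\in[m]}\Big(\sum_{a\in\mathcal A}\mathbb P(A=a\mid X=x,K=k)\,\big[\mathbf M^{\lambda,\mu}(a,k)\big]^\top\eta(x,a,k)\Big)_j,$$ where $$\mathbf M^{\lambda,\mu}(a,k)=\mathbf I-\frac{1}{p_{a,k}}\Big[\sum_{u\in\mathcal U_g}(\lambda^{(1)}_u-\lambda^{(2)}_u)\mathbf D^{a,k}_u+\sum_{u\in\mathcal U_{l,k}}(\mu^{(1)}_{k,u}-\mu^{(2)}_{k,u})\mathbf D^{a,k}_u\Big].$$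
   Context: Let $(X,A,Y,K)$ be a random tuple with $X\in\mathcal X\subseteq\mathbb R^d$, sensitive attribute $A$ in a finite set $\mathcal A$, label $Y\in[m]$ and client index $K\in[N]$; $p_{a,k}=\mathbb P(A=a,K=k)>0$. The Bayes score is $\eta(x,a,k)\in\Delta_m$ with $\eta_y(x,a,k)=\mathbb P(Y=y\mid X=x,A=a,K=k)$, where $\Delta_m$ is the probability simplex in $\mathbb R^m$ and $e_y$ the $y$-th standard basis vector. $\mathcal H=\{h:\mathcal X\to\Delta_m\}$ is the set of (measurable, randomized, attribute-blind) classifiers: given $X=x$, the prediction $\widehat Y$ satisfies $\mathbb P(\widehat Y=j\mid X=x)=h_j(x)$; $h$ is deterministic if its values lie in $\{e_1,\dots,e_m\}$. A federated classifier is $\mathbf h=(h_1,\dots,h_N)\in\mathcal H^N$, client $k$ using $h_k$. Confusion matrices: $\mathbf C^{a,k}_{i,j}(h_k)=\mathbb P(Y=i,\widehat Y=j\mid A=a,K=k)$. $\langle\mathbf A,\mathbf B\rangle=\sum_{i,j}a_{ij}b_{ij}$; $\mathbf 1_{m\times m}$ is the all-ones matrix, $\mathbf I$ the identity. Risk: $\mathcal R(\mathbf h)=\sum_{a,k}p_{a,k}\langle\mathbf 1_{m\times m}-\mathbf I,\mathbf C^{a,k}(h_k)\rangle$. Given finite index sets $\mathcal U_g$, $\mathcal U_{l,k}$ and fixed real $m\times m$ matrices $\mathbf D^{a,k}_u$: $\mathscr D^g_u(\mathbf h)=\sum_{a}\sum_{k}\langle\mathbf D^{a,k}_u,\mathbf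 C^{a,k}(h_k)\rangle$ ($u\in\mathcal U_g$) and $\mathscr D^{l,k}_u(\mathbf h)=\sum_a\langle\mathbf D^{a,k}_u,\mathbf C^{a,k}(h_k)\rangle$ ($u\in\mathcal U_{l,k}$). For constants $\xi^g,\xi^{l,k}>0$, the Lagrangian of the fair problem (minimize $\mathcal R$ subject to $|\mathscr D^g_u|\le\xi^g$ and $|\mathscr D^{l,k}_u|\le\xi^{l,k}$) is $$\mathcal L(\mathbf h,\lambda,\mu)=\mathcal R(\mathbf h)+\sum_{u\in\mathcal U_g}\big[(\lambda^{(1)}_u-\lambda^{(2)}_u)\mathscr D^g_u(\mathbf h)-(\lambda^{(1)}_u+\lambda^{(2)}_u)\xi^g\big]+\sum_{k\in[N]}\sum_{u\in\mathcal U_{l,k}}\big[(\mu^{(1)}_{k,u}-\mu^{(2)}_{k,u})\mathscr D^{l,k}_u(\mathbf h)-(\mu^{(1)}_{k,u}+\mu^{(2)}_{k,u})\xi^{l,k}\big].$$ *)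

From HB Require Import structures.
From mathcomp Require Import all_boot all_order all_algebra.
From mathcomp Require Import all_classical all_reals all_analysis.
Set Implicit Arguments. Unset Strict Implicit. Unset Printing Implicit Defensive.
Import Order.TTheory GRing.Theory Num.Theory.
Local Open Scope classical_set_scope.
Local Open Scope ring_scope.

Section FedFair.
Context {R : realType} {d : measure_display} {Omega : measurableType d}
  (P : probability Omega R) {dX : measure_display} {T : measurableType dX}
  {Atype : finType} {m N : nat}
  (X : Omega -> T) (A : Omega -> Atype) (Y : Omega -> 'I_m) (K : Omega -> 'I_N).

Definition pak (a : Atype) (k : 'I_N) : R := fine (P [set w | A w = a /\ K w = k]).

Definition classifier (h : T -> 'I_m -> R) : Prop :=
  (forall j, measurable_fun setT (fun x => h x j)) /\
  (forall x, (forall j, 0 <= h x j) /\ \sum_j h x j = 1).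

Definition deterministic (h : T -> 'I_m -> R) : Prop :=
  forall x, exists y : 'I_m, forall j, h x j = (j == y)%:R.

(* C^{a,k}_{i,j}(h) = P(Y = i, Yhat = j | A = a, K = k), where given X = x
   the prediction Yhat is drawn from h(x) independently of (A, Y, K) *)
Definition confmx (a : Atype) (k : 'I_N) (h : T -> 'I_m -> R) : 'M[R]_m :=
  \matrix_(i, j) ((pak a k)^-1 *
     Rintegral P [set w | A w = a /\ K w = k /\ Y w = i] (fun w => h (X w) j)).

Definition frob (M M' : 'M[R]_m) : R := \sum_i \sum_j M i j * M' i j.

Definition risk (h : 'I_N -> T -> 'I_m -> R) : R :=
  \sum_(a : Atype) \sum_(k < N)
     pak a k * frob (const_mx 1 - 1%:M) (confmx a k (h k)).

Context (Ug : finType) (Ul : 'I_N -> finType)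
  (Dg : Ug -> Atype -> 'I_N -> 'M[R]_m) (Dl : forall k, Ul k -> Atype -> 'M[R]_m).

Definition disp_g (u : Ug) (h : 'I_N -> T -> 'I_m -> R) : R :=
  \sum_(a : Atype) \sum_(k < N) frob (Dg u a k) (confmx a k (h k)).

Definition disp_l (k : 'I_N) (u : Ul k) (h : 'I_N -> T -> 'I_m -> R) : R :=
  \sum_(a : Atype) frob (Dl u a) (confmx a k (h k)).

Definition lagrangian (xig : R) (xil : 'I_N -> R)
  (lam1 lam2 : Ug -> R) (mu1 mu2 : forall k, Ul k -> R)
  (h : 'I_N -> T -> 'I_m -> R) : R :=
  risk h
  + \sum_(u : Ug) ((lam1 u - lam2 u) * disp_g u h - (lam1 u + lam2 u) * xig)
  + \sum_(k < N) \sum_(u : Ul k)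
       ((mu1 k u - mu2 k u) * disp_l u h - (mu1 k u + mu2 k u) * xil k).

Definition Mlm (lam1 lam2 : Ug -> R) (mu1 mu2 : forall k, Ul k -> R)
  (a : Atype) (k : 'I_N) : 'M[R]_m :=
  1%:M - (pak a k)^-1 *:
    (\sum_(u : Ug) (lam1 u - lam2 u) *: Dg u a k
     + \sum_(u : Ul k) (mu1 k u - mu2 k u) *: Dl u a).

(* the score vector  sum_a P(A=a | X=x, K=k) [M(a,k)]^T eta(x,a,k),
   with q a x k a version of P(A = a | X = x, K = k) *)
Definition score (lam1 lam2 : Ug -> R) (mu1 mu2 : forall k, Ul k -> R)
  (eta : T -> Atype -> 'I_N -> 'I_m -> R) (q : Atype -> T -> 'I_N -> R)
  (k : 'I_N) (x : T) (j : 'I_m) : R :=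
  \sum_(a : Atype) q a x k *
     (((Mlm lam1 lam2 mu1 mu2 a k)^T *m (\col_i eta x a k i)) j ord0).

Definition bayes_rule (lam1 lam2 : Ug -> R) (mu1 mu2 : forall k, Ul k -> R)
  (eta : T -> Atype -> 'I_N -> 'I_m -> R) (q : Atype -> T -> 'I_N -> R)
  (hs : 'I_N -> T -> 'I_m -> R) : Prop :=
  forall k, classifier (hs k) /\ deterministic (hs k) /\
    forall x, exists y : 'I_m, (forall j, hs k x j = (j == y)%:R) /\
      forall j, score lam1 lam2 mu1 mu2 eta q k x j
                <= score lam1 lam2 mu1 mu2 eta q k x y.

End FedFair.

From HB Require Import structures.
From mathcomp Require Import all_boot all_order all_algebra.
From mathcomp Require Import all_classical all_reals all_analysis.
From mathcomp Require Import measurable_realfun ring.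
Import Order.TTheory GRing.Theory Num.Theory.
Local Open Scope classical_set_scope.
Local Open Scope ring_scope.

Set Implicit Arguments. Unset Strict Implicit. Unset Printing Implicit Defensive.

(* Writing J for the all-ones matrix, the definition of M(a,k) gives
     p_{a,k} (J - M(a,k)) = p_{a,k} (J - I) + sum_u (λ¹_u - λ²_u) D_u^{a,k}
                                            + sum_u (μ¹_{k,u} - μ²_{k,u}) D_u^{a,k},
   so up to an additive constant the Lagrangian is
   sum_{a,k} p_{a,k} <J - M(a,k), C^{a,k}(h_k)>.  Disintegrating
     p_{a,k} C^{a,k}_{ij}(h_k) = E[1{K=k} h_k(X)_j η_i(X,a,k) P(A=a | X,K=k)]
   turns this into sum_k E[1{K=k} (1 - <h_k(X), s_k(X)>)], where s_k is the
   score vector.  For each x, a probability vector paired with s_k(x) is at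
   most max_j s_k(x)_j, and the point mass at a maximiser attains it. *)

Section integral_density.
Context {R : realType} {d : measure_display} {Omega : measurableType d}
  (mu : {measure set Omega -> \bar R}) {dX : measure_display} {T : measurableType dX}
  (X : Omega -> T) (S S' : set Omega) (phi : T -> R).
Hypotheses (mX : measurable_fun setT X) (mS : measurable S) (mS' : measurable S')
  (mphi : measurable_fun setT phi) (phi_ge0 : forall x, 0 <= phi x)
  (density : forall B, measurable B -> mu [set w | B (X w) /\ S w] =
     (\int[mu]_(w in [set w | B (X w) /\ S' w]) (phi (X w))%:E)%E).

Local Open Scope ereal_scope.
Import HBNNSimple.

Let mphiX : measurable_fun S' (fun w => (phi (X w))%:E).
Proof.
by apply/measurable_EFinP; apply: measurableT_comp => //; exact: measurable_funTS.
Qed.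

Lemma integral_density_indic (B : set T) (r : R) : measurable B -> (0 <= r)%R ->
  \int[mu]_(w in S) (r * \1_B (X w))%:E =
  \int[mu]_(w in S') ((r * \1_B (X w))%:E * (phi (X w))%:E).
Proof.
move=> mB r0.
have mXB : measurable (X @^-1` B) by rewrite -[X @^-1` B]setTI; exact: mX.
have indicX w : \1_B (X w) = \1_(X @^-1` B) w :> R by rewrite !indicE.
under eq_integral do rewrite EFinM indicX.
rewrite ge0_integralZl_EFin//; last exact/measurable_EFinP/measurable_indic.
rewrite integral_indic// -[X @^-1` B `&` S]/[set w | B (X w) /\ S w] density//.
rewrite -[[set w | _ /\ S' w]]/(X @^-1` B `&` S') setIC integral_mkcondr.
rewrite -ge0_integralZl_EFin//; last 2 first.
- by move=> w _; rewrite /patch; case: ifP => _; rewrite ?lee_fin.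
- by apply/measurable_restrict => //; exact: measurable_funS mphiX.
apply: eq_integral => w _; rewrite /patch indicX indicE.
by case: ifP => _; rewrite ?mulr1 ?mulr0 ?mul0e ?mule0.
Qed.

Lemma integral_density_nnsfun (h : {nnsfun T >-> R}) :
  \int[mu]_(w in S) (h (X w))%:E =
  \int[mu]_(w in S') ((h (X w))%:E * (phi (X w))%:E).
Proof.
have mh r : measurable (h @^-1` [set r]).
  by rewrite -[h @^-1` _]setTI; exact: measurable_funP.
have h_ge0 r z : (0 <= r * \1_(h @^-1` [set r]) z)%R.
  by have := nnfun_muleindic_ge0 h r z; rewrite -EFinM lee_fin.
have hfin : finite_set (range h) by exact: fimfunP.
have mhr r : measurable_fun setT (fun w => (r * \1_(h @^-1` [set r]) (X w))%:E).
  apply/measurable_EFinP; apply: measurable_funM => //.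
  by apply: measurableT_comp => //; exact: measurable_indic.
have hE w : (h (X w))%:E =
    (\sum_(r \in range h) (r * \1_(h @^-1` [set r]) (X w))%:E)%R.
  by rewrite fsumEFin// -fimfunE.
under eq_integral do rewrite hE.
under [RHS]eq_integral => w _.
  rewrite hE ge0_mule_fsuml; last by move=> r; rewrite lee_fin.
  over.
rewrite !ge0_integral_fsum//.
- apply: eq_fsbigr => r /= /[1!inE] -[x _ <-].
  by apply: integral_density_indic => //; exact: fun_ge0.
- by move=> r; apply: emeasurable_funM => //; exact: measurable_funTS.
- by move=> r w _; rewrite mule_ge0// lee_fin.
- by move=> r; exact: measurable_funTS.
- by move=> r w _; rewrite lee_fin.
Qed.

Lemma integral_density_ge0 (g : T -> R) :
  measurable_fun setT g -> (forall x, 0 <= g x)%R ->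
  \int[mu]_(w in S) (g (X w))%:E =
  \int[mu]_(w in S') ((g (X w))%:E * (phi (X w))%:E).
Proof.
move=> mg0 g_ge0.
have mg : measurable_fun setT (EFin \o g) by exact/measurable_EFinP.
pose h := nnsfun_approx measurableT mg.
have h_cvg x : (fun n => (h n x)%:E) @ \oo --> (g x)%:E.
  by apply: (cvg_nnsfun_approx measurableT mg) => // y _; rewrite lee_fin.
have h_nd x : {homo (fun n => (h n x)%:E) : a b / (a <= b)%N >-> a <= b}.
  by move=> a b ab; rewrite lee_fin; exact/lefP/nd_nnsfun_approx.
have mhX n : measurable_fun setT (fun w => (h n (X w))%:E).
  by apply/measurable_EFinP; apply: measurableT_comp.
under eq_integral do rewrite -(cvg_lim _ (h_cvg _))//.
under [RHS]eq_integral do rewrite -(cvg_lim _ (cvgeZr _ (h_cvg _)))//.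
rewrite monotone_convergence//; last 2 first.
- by move=> n; exact: measurable_funTS.
- by move=> n w _; rewrite lee_fin.
rewrite monotone_convergence//; last 3 first.
- by move=> n; apply: emeasurable_funM => //; exact: measurable_funTS.
- by move=> n w _; rewrite mule_ge0// lee_fin.
- by move=> w _ a b ab; rewrite lee_wpmul2r ?lee_fin//; exact: h_nd.
by under eq_fun do rewrite integral_density_nnsfun.
Qed.

End integral_density.

Definition bounded_measurable {R : realType} {d} {T : measurableType d}
    (f : T -> R) :=
  measurable_fun setT f /\ exists c : R, forall x, `|f x| <= c.

Section bounded_measurable.
Context {R : realType} {d : measure_display} {T : measurableType d}.
Implicit Types f g : T -> R.

Lemma bounded_measurable_cst (c : R) : bounded_measurable (fun _ : T => c).
Proof. by split => //; exists `|c|. Qed.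

Lemma bounded_measurableB f g : bounded_measurable f -> bounded_measurable g ->
  bounded_measurable (fun x => f x - g x).
Proof.
move=> [mf [c fc]] [mg [e ge]]; split; first exact: measurable_funB.
by exists (c + e) => x; apply: le_trans (ler_normB _ _) _; apply: lerD.
Qed.

Lemma bounded_measurableD f g : bounded_measurable f -> bounded_measurable g ->
  bounded_measurable (fun x => f x + g x).
Proof.
move=> [mf [c fc]] [mg [e ge]]; split; first exact: measurable_funD.
by exists (c + e) => x; apply: le_trans (ler_normD _ _) _; apply: lerD.
Qed.

Lemma bounded_measurableM f g : bounded_measurable f -> bounded_measurable g ->
  bounded_measurable (fun x => f x * g x).
Proof.
move=> [mf [c fc]] [mg [e ge]]; split; first exact: measurable_funM.
by exists (c * e) => x; rewrite normrM; apply: ler_pM.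
Qed.

Lemma bounded_measurable_sum (I : finType) (F : I -> T -> R) :
  (forall i, bounded_measurable (F i)) ->
  bounded_measurable (fun x => \sum_i F i x).
Proof.
move=> bF; rewrite (_ : (fun x => _) = \sum_i F i); last first.
  by apply/funext => x; rewrite fct_sumE.
apply: (big_ind bounded_measurable) => //; first exact: bounded_measurable_cst.
exact: bounded_measurableD.
Qed.

Lemma bounded_measurable_comp {dX} {U : measurableType dX} (X : T -> U)
    (g : U -> R) :
  measurable_fun setT X -> bounded_measurable g ->
  bounded_measurable (fun x => g (X x)).
Proof.
move=> mX [mg [c gc]]; split; first exact: measurableT_comp.
by exists c.
Qed.

Lemma bounded_measurable_integrable (mu : {finite_measure set T -> \bar R})
    (D : set T) f :
  measurable D -> bounded_measurable f -> mu.-integrable D (EFin \o f).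
Proof.
move=> mD [mf [c fc]]; apply: measurable_bounded_integrable => //.
- by rewrite -ge0_fin_numE ?measure_ge0//; exact: fin_num_measure.
- exact: measurable_funTS.
- rewrite /bounded_near; near=> M => t _ /=.
  apply: le_trans (fc t) _; near: M; exact: (nbhs_pinfty_ge (num_real c)).
Unshelve. all: end_near. Qed.

Lemma Rintegral_sum (mu : {finite_measure set T -> \bar R}) (D : set T)
    (I : finType) (F : I -> T -> R) :
  measurable D -> (forall i, bounded_measurable (F i)) ->
  \int[mu]_(x in D) (\sum_i F i x) = \sum_i \int[mu]_(x in D) F i x.
Proof.
move=> mD bF; have iF i := bounded_measurable_integrable mu mD (bF i).
rewrite /Rintegral; under eq_integral do rewrite -sumEFin.
rewrite integral_sum// -sum_fine// => i _.
exact: integrable_fin_num (iF i).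
Qed.

End bounded_measurable.

Definition prob_vector {R : numDomainType} {I : finType} (v : I -> R) :=
  (forall i, 0 <= v i) /\ \sum_i v i = 1.

Section prob_vector.
Context {R : realDomainType} {I : finType}.
Implicit Types v s : I -> R.

Lemma prob_vector_le1 v i : prob_vector v -> 0 <= v i <= 1.
Proof.
by move=> [v_ge0 v1]; rewrite v_ge0 -v1 (bigD1 i)//= lerDl sumr_ge0.
Qed.

Lemma prob_vector_dot_le v s y : prob_vector v -> (forall j, s j <= s y) ->
  \sum_j v j * s j <= s y.
Proof.
move=> [v_ge0 v1] sy; rewrite -[leRHS]mul1r -v1 mulr_suml.
by apply: ler_sum => j _; apply: ler_wpM2l.
Qed.

Lemma prob_vector_delta {J : finType} (y : J) :
  prob_vector (fun j => (j == y)%:R : R).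
Proof.
split=> [j|]; first exact: ler0n.
by rewrite (bigD1 y)//= eqxx big1 ?addr0// => j /negbTE ->.
Qed.

Lemma sum_delta_mul (s : I -> R) y : \sum_j (j == y)%:R * s j = s y.
Proof.
by rewrite (bigD1 y)//= eqxx mul1r big1 ?addr0// => j /negbTE ->; rewrite mul0r.
Qed.

End prob_vector.

Lemma bounded_measurable_prob_vector {R : realType} {d} {T : measurableType d}
    {I : finType} (v : T -> I -> R) i :
  (forall x, prob_vector (v x)) -> measurable_fun setT (fun x => v x i) ->
  bounded_measurable (fun x => v x i).
Proof.
move=> v_prob mv; split => //; exists 1 => x.
by have /andP[v_ge0 v_le1] := prob_vector_le1 i (v_prob x); rewrite ger0_norm.
Qed.

Section frobenius.
Context {R : realType} {m : nat}.
Implicit Types M : 'M[R]_m.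

Lemma frob0l M : frob 0 M = 0.
Proof. by rewrite /frob big1// => i _; rewrite big1// => j _; rewrite mxE mul0r. Qed.

Lemma frobDl M1 M2 M : frob (M1 + M2) M = frob M1 M + frob M2 M.
Proof.
rewrite /frob -big_split; apply: eq_bigr => i _.
by rewrite -big_split; apply: eq_bigr => j _; rewrite mxE mulrDl.
Qed.

Lemma frobZl c M1 M : frob (c *: M1) M = c * frob M1 M.
Proof.
rewrite /frob mulr_sumr; apply: eq_bigr => i _.
by rewrite mulr_sumr; apply: eq_bigr => j _; rewrite mxE mulrA.
Qed.

Lemma frob_suml (U : finType) (F : U -> 'M[R]_m) M :
  frob (\sum_u F u) M = \sum_u frob (F u) M.
Proof. exact: (big_morph (frob ^~ M) (fun _ _ => frobDl _ _ M) (frob0l M)). Qed.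

End frobenius.

Section first_argmax.
Context {R : realDomainType} {n : nat}.
Implicit Types s : 'I_n -> R.

(* Breaking ties towards the smallest index makes the maximiser unique and its
   indicator a finite Boolean combination of measurable comparisons. *)
Definition is_first_argmax s (y : 'I_n) : bool :=
  [forall i, (s i <= s y) && ((i < y)%N ==> (s i < s y))].

Lemma first_argmax_ge s y j : is_first_argmax s y -> s j <= s y.
Proof. by move=> /forallP/(_ j)/andP[]. Qed.

Lemma exists_first_argmax s (y0 : 'I_n) : exists y, is_first_argmax s y.
Proof.
have [j0 _ j0_max] := @arg_maxP _ _ _ y0 xpredT s isT.
have j0_ge i : s i <= s j0 := j0_max i isT.
have [y /eqP sy y_min] :=
  @arg_minP _ _ _ j0 (fun j => s j == s j0) (fun j : 'I_n => nat_of_ord j) (eqxx _).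
exists y; apply/forallP => i; rewrite sy j0_ge /=.
apply/implyP => iy; rewrite lt_neqAle j0_ge andbT; apply/negP => /eqP sij.
by have := y_min i (introT eqP sij); rewrite leEnat leqNgt iy.
Qed.

Lemma first_argmax_uniq s y1 y2 :
  is_first_argmax s y1 -> is_first_argmax s y2 -> y1 = y2.
Proof.
move=> /forallP y1_max /forallP y2_max; apply: val_inj => /=.
case: (ltngtP y1 y2) => // lt12.
- have /andP[_ /implyP/(_ lt12)] := y2_max y1.
  by have /andP[+ _] := y1_max y2; rewrite leNgt => /negbTE ->.
- have /andP[_ /implyP/(_ lt12)] := y1_max y2.
  by have /andP[+ _] := y2_max y1; rewrite leNgt => /negbTE ->.
Qed.

End first_argmax.

Lemma measurable_first_argmax {R : realType} {d} {T : measurableType d} {n}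
    (s : 'I_n -> T -> R) (y : 'I_n) :
  (forall i, measurable_fun setT (s i)) ->
  measurable_fun setT (fun x => is_first_argmax (s ^~ x) y).
Proof.
move=> ms; have -> : (fun x => is_first_argmax (s ^~ x) y) = fun x =>
    \big[andb/true]_i ((s i x <= s y x) && ((i < y)%N ==> (s i x < s y x))).
  by apply/funext => x; rewrite big_andE.
elim: (index_enum _) => [|i r IH].
  by under eq_fun do rewrite big_nil; exact: measurable_cst.
under eq_fun do rewrite big_cons.
apply: measurable_and => //; apply: measurable_and; first exact: measurable_fun_ler.
by case: (i < y)%N => //=; exact: measurable_fun_ltr.
Qed.

Section lagrangian_frob.
Variables (R : realType) (d : measure_display) (Omega : measurableType d)
  (P : probability Omega R) (dX : measure_display) (T : measurableType dX)
  (Atype : finType) (m N : nat)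
  (X : Omega -> T) (A : Omega -> Atype) (Y : Omega -> 'I_m) (K : Omega -> 'I_N)
  (Ug : finType) (Ul : 'I_N -> finType)
  (Dg : Ug -> Atype -> 'I_N -> 'M[R]_m) (Dl : forall k, Ul k -> Atype -> 'M[R]_m)
  (xig : R) (xil : 'I_N -> R)
  (lam1 lam2 : Ug -> R) (mu1 mu2 : forall k, Ul k -> R).
Hypothesis pak_neq0 : forall a k, pak P A K a k != 0.

Local Notation p := (pak P A K).
Local Notation C := (confmx P X A Y K).
Local Notation M := (Mlm P A K Dg Dl lam1 lam2 mu1 mu2).

Definition lagrangian_offset : R :=
  \sum_u (lam1 u + lam2 u) * xig
  + \sum_k \sum_(u : Ul k) (@mu1 k u + @mu2 k u) * xil k.

Lemma disp_g_frob (c : Ug -> R) (h : 'I_N -> T -> 'I_m -> R) :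
  \sum_u c u * disp_g P X A Y K Dg u h =
  \sum_a \sum_k frob (\sum_u c u *: Dg u a k) (C a k (h k)).
Proof.
under eq_bigr do rewrite /disp_g mulr_sumr.
rewrite exchange_big; apply: eq_bigr => a _.
under eq_bigr do rewrite mulr_sumr.
rewrite exchange_big; apply: eq_bigr => k _.
by rewrite frob_suml; apply: eq_bigr => u _; rewrite frobZl.
Qed.

Lemma disp_l_frob (c : forall k, Ul k -> R) (h : 'I_N -> T -> 'I_m -> R) :
  \sum_k \sum_(u : Ul k) c k u * disp_l P X A Y K Dl u h =
  \sum_a \sum_k frob (\sum_(u : Ul k) c k u *: Dl u a) (C a k (h k)).
Proof.
rewrite [RHS]exchange_big; apply: eq_bigr => k _.
under [LHS]eq_bigr do rewrite /disp_l mulr_sumr.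
rewrite exchange_big; apply: eq_bigr => a _.
by rewrite frob_suml; apply: eq_bigr => u _; rewrite frobZl.
Qed.

Lemma lagrangian_frobE h :
  lagrangian P X A Y K Dg Dl xig xil lam1 lam2 mu1 mu2 h =
  \sum_a \sum_k p a k * frob (const_mx 1 - M a k) (C a k (h k))
  - lagrangian_offset.
Proof.
have weightE a k : p a k * frob (const_mx 1 - M a k) (C a k (h k)) =
    p a k * frob (const_mx 1 - 1%:M) (C a k (h k))
    + frob (\sum_u (lam1 u - lam2 u) *: Dg u a k) (C a k (h k))
    + frob (\sum_(u : Ul k) (@mu1 k u - @mu2 k u) *: Dl u a) (C a k (h k)).
  rewrite /Mlm opprB addrCA frobDl frobZl frobDl mulrDr mulrA mulfV// mul1r.
  by rewrite [LHS]addrC addrA.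
under eq_bigr do under eq_bigr do rewrite weightE.
under eq_bigr do rewrite !big_split.
rewrite !big_split /= -disp_g_frob -disp_l_frob.
rewrite /lagrangian /lagrangian_offset sumrB.
under [X in _ + X]eq_bigr do rewrite sumrB.
by rewrite sumrB /risk; ring.
Qed.

End lagrangian_frob.

Section lagrangian_score.
Variables (R : realType) (d : measure_display) (Omega : measurableType d)
  (P : probability Omega R) (dX : measure_display) (T : measurableType dX)
  (Atype : finType) (m N : nat)
  (X : Omega -> T) (A : Omega -> Atype) (Y : Omega -> 'I_m) (K : Omega -> 'I_N)
  (eta : T -> Atype -> 'I_N -> 'I_m -> R) (q : Atype -> T -> 'I_N -> R)
  (Ug : finType) (Ul : 'I_N -> finType)
  (Dg : Ug -> Atype -> 'I_N -> 'M[R]_m) (Dl : forall k, Ul k -> Atype -> 'M[R]_m)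
  (lam1 lam2 : Ug -> R) (mu1 mu2 : forall k, Ul k -> R).
Hypotheses (mX : measurable_fun setT X)
  (mA : forall a, measurable [set w | A w = a])
  (mY : forall y, measurable [set w | Y w = y])
  (mK : forall k, measurable [set w | K w = k])
  (pak_gt0 : forall a k, 0 < pak P A K a k)
  (meta : forall a k i, measurable_fun setT (fun x => eta x a k i))
  (eta_prob : forall x a k, prob_vector (eta x a k))
  (etaH : forall a k i (B : set T), measurable B ->
     P [set w | B (X w) /\ A w = a /\ K w = k /\ Y w = i] =
     (\int[P]_(w in [set w | B (X w) /\ A w = a /\ K w = k]) (eta (X w) a k i)%:E)%E)
  (mq : forall a k, measurable_fun setT (fun x => q a x k))
  (q_prob : forall x k, prob_vector (fun a => q a x k))
  (qH : forall a k (B : set T), measurable B ->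
     P [set w | B (X w) /\ A w = a /\ K w = k] =
     (\int[P]_(w in [set w | B (X w) /\ K w = k]) (q a (X w) k)%:E)%E).

Local Notation p := (pak P A K).
Local Notation M := (Mlm P A K Dg Dl lam1 lam2 mu1 mu2).
Local Notation s := (score P A K Dg Dl lam1 lam2 mu1 mu2 eta q).

Lemma scoreE k x j : s k x j = \sum_a q a x k * \sum_i M a k i j * eta x a k i.
Proof.
apply: eq_bigr => a _; rewrite !mxE; congr (_ * _).
by apply: eq_bigr => i _; rewrite !mxE.
Qed.

Lemma bounded_measurable_score k j : bounded_measurable (fun x => s k x j).
Proof.
under eq_fun do rewrite scoreE.
apply: bounded_measurable_sum => a; apply: bounded_measurableM.
  exact: bounded_measurable_prob_vector (q_prob ^~ k) (mq a k).
apply: bounded_measurable_sum => i.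
apply: bounded_measurableM; first exact: bounded_measurable_cst.
exact: bounded_measurable_prob_vector (eta_prob ^~ a ^~ k) (meta a k i).
Qed.

Lemma pak_confmx h a k i j : classifier h ->
  p a k * confmx P X A Y K a k h i j =
  \int[P]_(w in [set w | K w = k]) (h (X w) j * eta (X w) a k i * q a (X w) k).
Proof.
move=> [mh h_prob]; rewrite mxE mulrA mulfV ?lt0r_neq0// mul1r /Rintegral.
have mAK : measurable [set w | A w = a /\ K w = k].
  exact: measurableI (mA a) (mK k).
have mAKY : measurable [set w | A w = a /\ K w = k /\ Y w = i].
  exact: measurableI (mA a) (measurableI _ _ (mK k) (mY i)).
have h_ge0 x : 0 <= h x j by case: (h_prob x).
have eta_ge0 x : 0 <= eta x a k i by case: (eta_prob x a k).
have q_ge0 x : 0 <= q a x k by case: (q_prob x k).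
congr fine.
rewrite (integral_density_ge0 mX mAKY mAK (meta a k i) eta_ge0 _ (g := h^~ j))//.
  2: by move=> B mB; exact: etaH.
rewrite (integral_density_ge0 mX mAK (mK k) (mq a k) q_ge0 _
  (g := fun x => h x j * eta x a k i))//.
- by move=> B mB; exact: qH.
- by apply: measurable_funM.
- by move=> x; rewrite mulr_ge0.
Qed.

Lemma cost_scoreE k x (v : 'I_m -> R) : prob_vector v ->
  \sum_a \sum_i \sum_j (const_mx 1 - M a k) i j * (v j * eta x a k i * q a x k)
  = 1 - \sum_j v j * s k x j.
Proof.
move=> [_ v1]; have [_ q1] := q_prob x k.
have mass1 : \sum_a \sum_i \sum_j v j * eta x a k i * q a x k = 1.
  transitivity (\sum_a q a x k * ((\sum_i eta x a k i) * \sum_j v j)).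
    apply: eq_bigr => a _; rewrite mulr_suml mulr_sumr; apply: eq_bigr => i _.
    by rewrite !mulr_sumr; apply: eq_bigr => j _; ring.
  rewrite -[RHS]q1 v1; apply: eq_bigr => a _.
  by have [_ ->] := eta_prob x a k; rewrite !mulr1.
have dotE : \sum_j v j * s k x j =
    \sum_a \sum_i \sum_j M a k i j * (v j * eta x a k i * q a x k).
  under eq_bigr do rewrite scoreE mulr_sumr.
  rewrite exchange_big; apply: eq_bigr => a _.
  under eq_bigr do rewrite !mulr_sumr.
  rewrite exchange_big; apply: eq_bigr => i _; apply: eq_bigr => j _.
  ring.
rewrite -[in RHS]mass1 dotE -sumrB; apply: eq_bigr => a _.
rewrite -sumrB; apply: eq_bigr => i _; rewrite -sumrB; apply: eq_bigr => j _.
by rewrite !mxE mulrBl mul1r.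
Qed.

Lemma lagrangian_scoreE (xig : R) (xil : 'I_N -> R) h :
  (forall k, classifier (h k)) ->
  lagrangian P X A Y K Dg Dl xig xil lam1 lam2 mu1 mu2 h =
  \sum_k \int[P]_(w in [set w | K w = k]) (1 - \sum_j h k (X w) j * s k (X w) j)
  - lagrangian_offset xig xil lam1 lam2 mu1 mu2.
Proof.
move=> h_cl; rewrite lagrangian_frobE => [|a k]; last by rewrite lt0r_neq0.
congr (_ - _); rewrite exchange_big; apply: eq_bigr => k _.
have [mh h_prob] := h_cl k.
have bounded_integrand a i j : bounded_measurable
    (fun w => h k (X w) j * eta (X w) a k i * q a (X w) k).
  apply: (bounded_measurable_comp
    (g := fun x => h k x j * eta x a k i * q a x k)) => //.
  apply: bounded_measurableM.
    apply: bounded_measurableM.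
      exact: bounded_measurable_prob_vector h_prob (mh j).
    exact: bounded_measurable_prob_vector (eta_prob ^~ a ^~ k) (meta a k i).
  exact: bounded_measurable_prob_vector (q_prob ^~ k) (mq a k).
have bounded_term a i j c : bounded_measurable
    (fun w => c * (h k (X w) j * eta (X w) a k i * q a (X w) k)).
  exact: bounded_measurableM (bounded_measurable_cst c) (bounded_integrand a i j).
under eq_Rintegral => w _ do rewrite -(cost_scoreE k (X w) (h_prob (X w))).
rewrite Rintegral_sum//; last first.
  by move=> a; do 2 apply: bounded_measurable_sum => ?; exact: bounded_term.
apply: eq_bigr => a _; rewrite /frob mulr_sumr Rintegral_sum//; last first.
  by move=> i; apply: bounded_measurable_sum => j; exact: bounded_term.
apply: eq_bigr => i _; rewrite mulr_sumr Rintegral_sum//.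
apply: eq_bigr => j _; rewrite mulrCA pak_confmx// RintegralZl//.
exact: bounded_measurable_integrable.
Qed.

Lemma bayes_rule_lagrangian_le (xig : R) (xil : 'I_N -> R) hs h :
  bayes_rule P A K Dg Dl lam1 lam2 mu1 mu2 eta q hs ->
  (forall k, classifier (h k)) ->
  lagrangian P X A Y K Dg Dl xig xil lam1 lam2 mu1 mu2 hs
  <= lagrangian P X A Y K Dg Dl xig xil lam1 lam2 mu1 mu2 h.
Proof.
move=> hs_bayes h_cl; have hs_cl k : classifier (hs k) by case: (hs_bayes k).
have integrable_cost (g : 'I_N -> T -> 'I_m -> R) k : classifier (g k) ->
    P.-integrable [set w | K w = k]
      (EFin \o fun w => 1 - \sum_j g k (X w) j * s k (X w) j).
  move=> [mg g_prob]; apply: bounded_measurable_integrable => //.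
  apply: bounded_measurableB; first exact: bounded_measurable_cst.
  apply: bounded_measurable_sum => j; apply: bounded_measurableM.
    exact: bounded_measurable_comp (bounded_measurable_prob_vector g_prob (mg j)).
  exact: bounded_measurable_comp (bounded_measurable_score k j).
rewrite !lagrangian_scoreE// lerD2r; apply: ler_sum => k _.
apply: le_Rintegral => //; [exact: integrable_cost|exact: integrable_cost|].
move=> w _; rewrite lerD2l lerN2.
have [_ [_ hs_max]] := hs_bayes k; have [y [hsy y_max]] := hs_max (X w).
under [leRHS]eq_bigr do rewrite hsy; rewrite sum_delta_mul.
exact: prob_vector_dot_le ((h_cl k).2 (X w)) y_max.
Qed.

Lemma exists_bayes_rule (y0 : 'I_m) :
  exists hs, bayes_rule P A K Dg Dl lam1 lam2 mu1 mu2 eta q hs.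
Proof.
exists (fun k x j => if is_first_argmax (s k x) j then 1 else 0) => k.
have first_argmaxE x : exists y,
    (forall j, (if is_first_argmax (s k x) j then 1 else 0) = (j == y)%:R :> R)
    /\ forall j, s k x j <= s k x y.
  have [y y_first] := exists_first_argmax (s k x) y0.
  exists y; split => j; last exact: first_argmax_ge.
  have -> : is_first_argmax (s k x) j = (j == y).
    by apply/idP/eqP => [/first_argmax_uniq/(_ y_first)|->].
  by case: (j == y).
split; [split|split] => [j|x|x|x].
- apply: measurable_fun_ifT => //; apply: measurable_first_argmax => i.
  by case: (bounded_measurable_score k i).
- have [y [yE _]] := first_argmaxE x; split => [j|]; first by rewrite yE ler0n.
  by under eq_bigr do rewrite yE; exact: (prob_vector_delta y).2.
- by have [y [yE _]] := first_argmaxE x; exists y.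
- exact: first_argmaxE.
Qed.

End lagrangian_score.

Lemma probability_inhabited {R : realType} {d} {Omega : measurableType d}
  (P : probability Omega R) : inhabited Omega.
Proof.
apply: contrapT => no_point.
have setT0 : [set: Omega] = set0.
  by apply/seteqP; split => // w _; apply: no_point; exact: inhabits w.
have := probability_setT P; rewrite setT0 measure0 => /(congr1 fine)/= /eqP.
by rewrite eq_sym oner_eq0.
Qed.

Unset Implicit Arguments.

Theorem proposition2 (R : realType) (d : measure_display) (Omega : measurableType d)
  (P : probability Omega R) (dX : measure_display) (T : measurableType dX)
  (Atype : finType) (m N : nat)
  (X : Omega -> T) (A : Omega -> Atype) (Y : Omega -> 'I_m) (K : Omega -> 'I_N)
  (eta : T -> Atype -> 'I_N -> 'I_m -> R) (q : Atype -> T -> 'I_N -> R)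
  (Ug : finType) (Ul : 'I_N -> finType)
  (Dg : Ug -> Atype -> 'I_N -> 'M[R]_m) (Dl : forall k, Ul k -> Atype -> 'M[R]_m)
  (xig : R) (xil : 'I_N -> R)
  (lam1 lam2 : Ug -> R) (mu1 mu2 : forall k, Ul k -> R) :
  (* the random tuple (X, A, Y, K) *)
  measurable_fun setT X ->
  (forall a, measurable [set w | A w = a]) ->
  (forall y, measurable [set w | Y w = y]) ->
  (forall k, measurable [set w | K w = k]) ->
  (forall a k, 0 < pak P A K a k) ->
  (* eta(x,a,k) is (a version of) the Bayes score P(Y = . | X = x, A = a, K = k) *)
  (forall a k i, measurable_fun setT (fun x => eta x a k i)) ->
  (forall x a k, (forall i, 0 <= eta x a k i) /\ \sum_i eta x a k i = 1) ->
  (forall a k i (B : set T), measurable B ->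
     P [set w | B (X w) /\ A w = a /\ K w = k /\ Y w = i] =
     (\int[P]_(w in [set w | B (X w) /\ A w = a /\ K w = k]) (eta (X w) a k i)%:E)%E) ->
  (* q a x k is (a version of) P(A = a | X = x, K = k) *)
  (forall a k, measurable_fun setT (fun x => q a x k)) ->
  (forall x k, (forall a, 0 <= q a x k) /\ \sum_a q a x k = 1) ->
  (forall a k (B : set T), measurable B ->
     P [set w | B (X w) /\ A w = a /\ K w = k] =
     (\int[P]_(w in [set w | B (X w) /\ K w = k]) (q a (X w) k)%:E)%E) ->
  (* fairness constants and non-negative multipliers *)
  0 < xig -> (forall k, 0 < xil k) ->
  (forall u, 0 <= lam1 u) -> (forall u, 0 <= lam2 u) ->
  (forall k u, 0 <= mu1 k u) -> (forall k u, 0 <= mu2 k u) ->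
  (exists hs, bayes_rule P A K Dg Dl lam1 lam2 mu1 mu2 eta q hs) /\
  (forall hs, bayes_rule P A K Dg Dl lam1 lam2 mu1 mu2 eta q hs ->
     forall h : 'I_N -> T -> 'I_m -> R, (forall k, classifier (h k)) ->
       lagrangian P X A Y K Dg Dl xig xil lam1 lam2 mu1 mu2 hs
       <= lagrangian P X A Y K Dg Dl xig xil lam1 lam2 mu1 mu2 h).
Proof.
move=> mX mA mY mK pak_gt0 meta eta_prob etaH mq q_prob qH _ _ _ _ _ _.
have [w0] := probability_inhabited P; split.
  exact: (exists_bayes_rule P A K Dg Dl lam1 lam2 mu1 mu2
    meta eta_prob mq q_prob (Y w0)).
move=> hs hs_bayes h h_cl.
exact: (bayes_rule_lagrangian_le mX mA mY mK pak_gt0 meta eta_prob etaH mq q_prob qH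
  xig xil hs_bayes h_cl).
Qed.
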